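(* Let $T=2^m$, $d\ge1$ and $u_{1:T}\in(\mathbb{R}^d)^T$, and let $P=\sum_{t=1}^{T-1}\|u_{t+1}-u_t\|_2$. Then for every scale $j^*\in[1:m]$, $P^{(j^* )}\le P$, where $P^{(j^* )}$ is defined in the context.
   Context: Haar features for $T=2^m$: for scale $j\in[1:m]$ and location $l\in[1:2^{-j}T]$, $h^{(j,l)}\in\mathbb{R}^T$ has $t$-th entry $1$ for $t\in[2^j(l-1)+1:2^j(l-1)+2^{j-1}]$, $-1$ for $t\in[2^j(l-1)+2^{j-1}+1:2^jl]$, and $0$ otherwise; normalized $\tilde h^{(j,l)}=2^{-j/2}h^{(j,l)}$. For $i\in[1:d]$, $u^{(i)}_{1:T}\in\mathbb{R}^T$ is the sequence of $i$-th coordinates of $u_1,\ldots,u_T$. Coefficient $\hat u^{(j,l)}\in\mathbb{R}^d$ has $i$-th entry $\langle\tilde h^{(j,l)},u^{(i)}_{1:T}\rangle$. Detail sequences: $z^{(j,l)}_t=\hat u^{(j,l)}\tilde h^{(j,l)}_t\in\mathbb{R}^d$. Path length of the $(j,l)$ detail within its support: $P^{(j,l)}=\sum_{t=2^j(l-1)+1}^{2^jl-1}\|z^{(j,l)}_{t+1}-z^{(j,l)}_t\|_2$, and $P^{(j)}=\sum_l P^{(j,l)}$. *)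

From mathcomp Require Import all_boot all_order all_algebra.
From mathcomp Require Import reals.
Set Implicit Arguments. Unset Strict Implicit. Unset Printing Implicit Defensive.
Import Order.TTheory GRing.Theory Num.Theory.
Local Open Scope ring_scope.

Section Haar.
Variable R : realType.
Variable d : nat.

(* Time indices are 1-based natural numbers t in [1:T]; the sequence
   u : nat -> 'rV[R]_d is only ever read at t in [1:T]. *)

Definition haar (j l t : nat) : R :=
  if ((2 ^ j * (l - 1)).+1 <= t <= 2 ^ j * (l - 1) + 2 ^ (j - 1))%N then 1
  else if ((2 ^ j * (l - 1) + 2 ^ (j - 1)).+1 <= t <= 2 ^ j * l)%N then -1
  else 0.

Definition haarn (j l t : nat) : R := (Num.sqrt (2 ^+ j))^-1 * haar j l t.

Definition norm2 (x : 'rV[R]_d) : R := Num.sqrt (\sum_(i < d) x 0 i ^+ 2).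

Definition haar_coef (T : nat) (u : nat -> 'rV[R]_d) (j l : nat) : 'rV[R]_d :=
  \row_(i < d) \sum_(1 <= t < T.+1) haarn j l t * u t 0 i.

Definition detail (T : nat) (u : nat -> 'rV[R]_d) (j l t : nat) : 'rV[R]_d :=
  haarn j l t *: haar_coef T u j l.

Definition path_jl (T : nat) (u : nat -> 'rV[R]_d) (j l : nat) : R :=
  \sum_((2 ^ j * (l - 1)).+1 <= t < 2 ^ j * l)
     norm2 (detail T u j l t.+1 - detail T u j l t).

Definition path_j (T : nat) (u : nat -> 'rV[R]_d) (j : nat) : R :=
  \sum_(1 <= l < (T %/ 2 ^ j).+1) path_jl T u j l.

Definition path_len (T : nat) (u : nat -> 'rV[R]_d) : R :=
  \sum_(1 <= t < T) norm2 (u t.+1 - u t).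

End Haar.

(* Fix a block l of length 2^j, put h = 2^(j-1) and s = 2^(-j/2).  On the block the
   detail sequence equals s^2 w on the first half and -s^2 w on the second, where
   w is the sum of the h increments u_(t+h) - u_t over the first half.  Its path
   length is therefore the single jump 2 s^2 |w| = |w| / h.  Each increment
   u_(t+h) - u_t is bounded by the path length of u inside the block, so P^(j,l)
   is at most that path length, and summing over the disjoint blocks gives
   P^(j) <= P. *)

From mathcomp Require Import all_boot all_order all_algebra.
From mathcomp Require Import reals ring zify.
Set Implicit Arguments.
Unset Strict Implicit.
Unset Printing Implicit Defensive.

Import Order.TTheory GRing.Theory Num.Theory.
Local Open Scope ring_scope.

Section CauchySchwarz.
Variables (R : realDomainType) (I : finType).
Implicit Types x y : I -> R.

Lemma lagrange_identity x y :
  \sum_i \sum_k (x i * y k - x k * y i) ^+ 2 =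
  2 * ((\sum_i x i ^+ 2) * (\sum_k y k ^+ 2) - (\sum_i x i * y i) ^+ 2).
Proof.
pose A i k := x i ^+ 2 * y k ^+ 2; pose B i k := x i * y i * (x k * y k).
have expand i k : (x i * y k - x k * y i) ^+ 2 = A i k + A k i - B i k *+ 2.
  by rewrite /A /B; ring.
under eq_bigr do under eq_bigr do rewrite expand.
under eq_bigr do rewrite sumrB big_split sumrMnl /=.
rewrite sumrB big_split sumrMnl /= [\sum_i \sum_k A k i]exchange_big /=.
rewrite expr2 !big_distrlr /=.
ring.
Qed.

Lemma cauchy_schwarz x y :
  (\sum_i x i * y i) ^+ 2 <= (\sum_i x i ^+ 2) * (\sum_i y i ^+ 2).
Proof.
rewrite -subr_ge0 -(pmulr_rge0 _ (ltr0Sn R 1)) -lagrange_identity.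
by apply: sumr_ge0 => i _; apply: sumr_ge0 => k _; apply: sqr_ge0.
Qed.

End CauchySchwarz.

Section NonnegativeSums.
Variables (R : realDomainType) (F : nat -> R).
Hypothesis F_ge0 : forall t, 0 <= F t.

Lemma ler_sum_nat_widen a b c e : (a <= b)%N -> (c <= e)%N ->
  \sum_(b <= t < c) F t <= \sum_(a <= t < e) F t.
Proof.
move=> ab ce; have sum_ge0 m n : 0 <= \sum_(m <= t < n) F t by exact: sumr_ge0.
have [cb|bc] := leqP c b; first by rewrite big_geq.
rewrite (big_cat_nat ab (leq_trans (ltnW bc) ce)) (big_cat_nat (ltnW bc) ce) /=.
by rewrite addrCA lerDl addr_ge0.
Qed.

Lemma ler_sum_nat_skip a b c : (a <= b <= c)%N ->
  \sum_(a.+1 <= t < b) F t + \sum_(b.+1 <= t < c) F t <= \sum_(a.+1 <= t < c) F t.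
Proof.
case/andP; rewrite leq_eqVlt => /predU1P[<- _|ab bc].
  by rewrite big_geq // add0r.
by rewrite (big_cat_nat ab bc) lerD2l ler_sum_nat_widen.
Qed.

Lemma sum_blocks_le p N :
  \sum_(1 <= l < N.+1) \sum_((p * (l - 1)).+1 <= t < p * l) F t
  <= \sum_(1 <= t < p * N) F t.
Proof.
elim: N => [|N IH]; first by rewrite muln0 !big_geq.
rewrite big_nat_recr //= subn1 /=; apply: le_trans (lerD IH (lexx _)) _.
by apply: ler_sum_nat_skip; rewrite leq_mul2l leqnSn orbT.
Qed.

End NonnegativeSums.

Definition lag_sum (V : zmodType) (F : nat -> V) (b h : nat) : V :=
  \sum_(k < h) (F (b.+1 + k + h)%N - F (b.+1 + k)%N).

Section EuclideanNorm.
Variables (R : realType) (d : nat).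
Implicit Types x y : 'rV[R]_d.

Lemma norm2_ge0 x : 0 <= norm2 x.
Proof. exact: sqrtr_ge0. Qed.

Lemma norm2_sqr x : norm2 x ^+ 2 = \sum_i x 0 i ^+ 2.
Proof. by rewrite sqr_sqrtr // sumr_ge0 // => i _; apply: sqr_ge0. Qed.

Lemma norm2_0 : norm2 (0 : 'rV[R]_d) = 0.
Proof. by rewrite /norm2 big1 ?sqrtr0 // => i _; rewrite mxE expr0n. Qed.

Lemma norm2Z c x : norm2 (c *: x) = `|c| * norm2 x.
Proof.
rewrite /norm2 -sqrtr_sqr -sqrtrM ?sqr_ge0 // mulr_sumr.
by congr Num.sqrt; apply: eq_bigr => i _; rewrite mxE exprMn.
Qed.

Lemma norm2N x : norm2 (- x) = norm2 x.
Proof. by rewrite -scaleN1r norm2Z normrN1 mul1r. Qed.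

Lemma dot_le_norm2 x y : \sum_i x 0 i * y 0 i <= norm2 x * norm2 y.
Proof.
apply: le_trans (ler_norm _) _.
rewrite -ler_sqr ?nnegrE ?mulr_ge0 ?norm2_ge0 // real_normK ?num_real //.
by rewrite exprMn !norm2_sqr (cauchy_schwarz (fun i => x 0 i)).
Qed.

Lemma norm2D x y : norm2 (x + y) <= norm2 x + norm2 y.
Proof.
rewrite -ler_sqr ?nnegrE ?addr_ge0 ?norm2_ge0 // sqrrD !norm2_sqr.
have -> : \sum_i (x + y) 0 i ^+ 2 =
    \sum_i x 0 i ^+ 2 + (\sum_i x 0 i * y 0 i) *+ 2 + \sum_i y 0 i ^+ 2.
  by rewrite -sumrMnl -!big_split; apply: eq_bigr => i _; rewrite mxE sqrrD.
by rewrite lerD2r lerD2l lerMn2r dot_le_norm2.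
Qed.

Lemma norm2_sum I (r : seq I) (P : pred I) (F : I -> 'rV[R]_d) :
  norm2 (\sum_(i <- r | P i) F i) <= \sum_(i <- r | P i) norm2 (F i).
Proof.
elim/big_ind2: _ => // [|x1 y1 x2 y2 le1 le2]; first by rewrite norm2_0.
exact: le_trans (norm2D _ _) (lerD le1 le2).
Qed.

Lemma norm2_telescope (u : nat -> 'rV[R]_d) m n : (m <= n)%N ->
  norm2 (u n - u m) <= \sum_(m <= t < n) norm2 (u t.+1 - u t).
Proof. by move=> mn; rewrite -telescope_sumr // norm2_sum. Qed.

Lemma norm2_lag_sum_le (u : nat -> 'rV[R]_d) b h :
  norm2 (lag_sum u b h)
  <= h%:R * \sum_(b.+1 <= t < b + h + h) norm2 (u t.+1 - u t).
Proof.
set S := \sum_(_ <= t < _) _.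
have -> : h%:R * S = \sum_(k < h) S by rewrite sumr_const card_ord mulr_natl.
apply: le_trans (norm2_sum _ _ _) (ler_sum _ _) => k _.
apply: le_trans (norm2_telescope _ (leq_addr _ _)) _.
apply: ler_sum_nat_widen => [t||]; rewrite ?norm2_ge0 ?leq_addr //.
by have := ltn_ord k; lia.
Qed.

End EuclideanNorm.

Definition haar_wave {R : ringType} (a h t : nat) : R :=
  if (a < t <= a + h)%N then 1 else if (a + h < t <= a + h + h)%N then -1 else 0.

Section HaarWave.
Variable R : numDomainType.
Local Notation haar_wave := (@haar_wave R).

Lemma haar_wave_up a h t : (a < t <= a + h)%N -> haar_wave a h t = 1.
Proof. by rewrite /haar_wave => ->. Qed.

Lemma haar_wave_down a h t : (a + h < t <= a + h + h)%N -> haar_wave a h t = -1.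
Proof. by move=> ht; rewrite /haar_wave ht ifF //; lia. Qed.

Lemma haar_wave_out a h t : (t <= a)%N || (a + h + h < t)%N -> haar_wave a h t = 0.
Proof. by move=> ht; rewrite /haar_wave !ifF //; lia. Qed.

Lemma haar_wave_variation a h : (0 < h)%N ->
  \sum_(a.+1 <= t < a + h + h) `|haar_wave a h t.+1 - haar_wave a h t| = 2.
Proof.
move=> h0; have le1 : (a.+1 <= a + h)%N by lia.
have le2 : (a + h <= a + h + h)%N by lia.
rewrite (big_cat_nat le1 le2) /= [X in _ + X]big_ltn; last by lia.
rewrite (@haar_wave_down _ _ (a + h).+1); last by lia.
rewrite (@haar_wave_up _ _ (a + h)); last by lia.
rewrite big_nat_cond big1 => [|t /andP[ht _]]; last first.
  rewrite !haar_wave_up ?subrr ?normr0 //; lia.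
rewrite big_nat_cond big1 => [|t /andP[ht _]]; last first.
  rewrite !haar_wave_down ?subrr ?normr0 //; lia.
by rewrite add0r addr0 -opprD normrN -mulr2n normr_nat.
Qed.

Lemma sum_haar_wave (V : lmodType R) (F : nat -> V) a h T : (a + h + h <= T)%N ->
  \sum_(1 <= t < T.+1) haar_wave a h t *: F t = - lag_sum F a h.
Proof.
move=> hT.
have wave_on m n c : (forall t, (m <= t < n)%N -> haar_wave a h t = c) ->
    \sum_(m <= t < n) haar_wave a h t *: F t = c *: \sum_(m <= t < n) F t.
  by move=> wc; rewrite scaler_sumr; apply: eq_big_nat => t /wc ->.
have window b : \sum_(b.+1 <= t < (b + h).+1) F t = \sum_(k < h) F (b.+1 + k)%N.
  rewrite -[b.+1]add0n big_addn subSS addKn big_mkord.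
  by apply: eq_bigr => k _; rewrite addnC.
have le1 : (1 <= a.+1)%N by [].
have le2 : (a.+1 <= (a + h).+1)%N by lia.
have le3 : ((a + h).+1 <= (a + h + h).+1)%N by lia.
have le4 : ((a + h + h).+1 <= T.+1)%N by lia.
rewrite (big_cat_nat le1 (leq_trans le2 (leq_trans le3 le4))).
rewrite (big_cat_nat le2 (leq_trans le3 le4)) (big_cat_nat le3 le4) /=.
rewrite (wave_on _ _ 0) => [|t ht]; last by rewrite haar_wave_out //; lia.
rewrite [X in _ + (_ + (_ + X))](wave_on _ _ 0) => [|t ht]; last first.
  by rewrite haar_wave_out //; lia.
rewrite (wave_on _ _ 1) => [|t ht]; last by rewrite haar_wave_up //; lia.
rewrite (wave_on _ _ (-1)) => [|t ht]; last by rewrite haar_wave_down //; lia.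
rewrite !scale0r scale1r scaleN1r add0r addr0 (window a) (window (a + h)).
by rewrite -sumrB -sumrN; apply: eq_bigr => k _; rewrite opprB addnAC.
Qed.

End HaarWave.

Section HaarBlock.
Variables (R : realType) (d T : nat) (u : nat -> 'rV[R]_d) (j l : nat).

Lemma haar_coefE : haar_coef T u j l = \sum_(1 <= t < T.+1) haarn R j l t *: u t.
Proof.
by apply/rowP => i; rewrite !mxE summxE; apply: eq_bigr => t _; rewrite !mxE.
Qed.

Hypotheses (j_gt0 : (0 < j)%N) (l_gt0 : (0 < l)%N).

Local Notation s := (Num.sqrt (2 ^+ j : R))^-1.
Local Notation a := (2 ^ j * (l - 1))%N.
Local Notation h := (2 ^ (j - 1))%N.

Lemma haar_block_end : (2 ^ j * l = a + h + h)%N.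
Proof.
by case: j j_gt0 => // i _; case: l l_gt0 => // k _; rewrite !subn1 /= expnS; nia.
Qed.

Lemma haarnE t : haarn R j l t = s * haar_wave a h t.
Proof. by rewrite /haarn /haar /haar_wave haar_block_end. Qed.

Hypothesis block_le_T : (2 ^ j * l <= T)%N.

Lemma haar_coef_block : haar_coef T u j l = - (s *: lag_sum u a h).
Proof.
rewrite haar_coefE; under eq_bigr do rewrite haarnE -scalerA.
by rewrite -scaler_sumr sum_haar_wave -?haar_block_end // scalerN.
Qed.

Lemma path_jlE : path_jl T u j l = h%:R^-1 * norm2 (lag_sum u a h).
Proof.
have s_ge0 : 0 <= s by rewrite invr_ge0 sqrtr_ge0.
have s_sqr : s * s = (2 ^+ j)^-1 by rewrite -invfM -expr2 sqr_sqrtr // exprn_ge0.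
have two_h : (2 ^+ j : R) = 2 * h%:R.
  by case: j j_gt0 => // i _; rewrite subn1 /= natrX exprS.
rewrite /path_jl haar_block_end.
under eq_bigr do rewrite /detail -scalerBl norm2Z !haarnE -mulrBr normrM ger0_norm //.
rewrite -mulr_suml -mulr_sumr haar_wave_variation ?expn_gt0 //.
rewrite haar_coef_block norm2N norm2Z ger0_norm //.
by rewrite mulrCA !mulrA s_sqr two_h; field; rewrite pnatr_eq0 expn_eq0.
Qed.

Lemma path_jl_le :
  path_jl T u j l <= \sum_(a.+1 <= t < 2 ^ j * l) norm2 (u t.+1 - u t).
Proof.
by rewrite path_jlE ler_pdivrMl ?ltr0n ?expn_gt0 // haar_block_end norm2_lag_sum_le.
Qed.

End HaarBlock.

Theorem lemma7 (R : realType) (m d : nat) (u : nat -> 'rV[R]_d) (j : nat) :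
  (0 < d)%N -> (1 <= j <= m)%N ->
  path_j (2 ^ m) u j <= path_len (2 ^ m) u.
Proof.
move=> _ /andP[j_gt0 j_le_m].
have blocks_cover : (2 ^ j * (2 ^ m %/ 2 ^ j) = 2 ^ m)%N.
  by rewrite mulnC divnK // dvdn_exp2l.
have := sum_blocks_le (fun t => norm2_ge0 (u t.+1 - u t)) (2 ^ j) (2 ^ m %/ 2 ^ j).
rewrite blocks_cover; apply: le_trans; apply: ler_sum_nat => l /andP[l_gt0 l_le].
by apply: path_jl_le; rewrite // -blocks_cover leq_mul2l -ltnS l_le orbT.
Qed.
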